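(* Let $p>2$ be a prime and let $L$ be a Latin square of order $p$ with parity type $(k,m)$, and let $\mathfrak A(L)$ be its autotopy group. (i) If $k\neq0$ or $m\neq0$, then $p^2$ does not divide $|\mathfrak A(L)|$. (ii) If $k\neq0$ and $m\neq0$, then $p$ does not divide $|\mathfrak A(L)|$. (iii) If the parity type of $L$ is $(0,0)$ but $L$ is not isotopic to the Cayley table of $\mathbb Z_p$, then $p^2$ does not divide $|\mathfrak A(L)|$.
   Context: A Latin square of order $n$ is an $n\times n$ array with entries in $[n]$, each symbol once in each row and column. An isotopism $(\alpha,\beta,\gamma)\in S_n^3$ acts by $(\alpha,\beta,\gamma)(L)=L'$ with $L'(\alpha(r),\beta(c))=\gamma(L(r,c))$; two squares are isotopic if one is mapped to the other by an isotopism. The autotopy group $\mathfrak A(L)$ is $\{\Theta\in S_n^3:\Theta(L)=L\}$. Rows and columns are viewed as permutations: if symbol $i$ appears in the $j$th place of a row (column) $\sigma$, then $\sigma(i)=j$. The parity type of $L$ is $(k,m)$, $0\le k,m\le n/2$, if $k$ of its rows have one sign and the other $n-k$ rows the opposite sign, and $m$ of its columns have one sign and the other $n-m$ columns the opposite sign. *)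

From mathcomp Require Import all_boot all_fingroup.
Set Implicit Arguments. Unset Strict Implicit. Unset Printing Implicit Defensive.
Local Open Scope group_scope.

Definition square (n : nat) := {ffun 'I_n * 'I_n -> 'I_n}.

Definition latin n (L : square n) : Prop :=
  (forall r, injective (fun c => L (r, c))) /\
  (forall c, injective (fun r => L (r, c))).

Definition row_perm n (L : square n) (r : 'I_n) : option {perm 'I_n} :=
  [pick s : {perm 'I_n} | [forall i, L (r, s i) == i]].
Definition col_perm n (L : square n) (c : 'I_n) : option {perm 'I_n} :=
  [pick s : {perm 'I_n} | [forall i, L (s i, c) == i]].

Definition row_odd n (L : square n) r : bool :=
  if row_perm L r is Some s then odd_perm s else false.
Definition col_odd n (L : square n) c : bool :=
  if col_perm L c is Some s then odd_perm s else false.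

Definition parity_type n (L : square n) : nat * nat :=
  (minn #|[set r | row_odd L r]| #|[set r | ~~ row_odd L r]|,
   minn #|[set c | col_odd L c]| #|[set c | ~~ col_odd L c]|).

Definition isotopism n := ({perm 'I_n} * {perm 'I_n} * {perm 'I_n})%type.

(* (alpha,beta,gamma)(L) = L' with L'(alpha r, beta c) = gamma (L (r, c)). *)
Definition isotope n (t : isotopism n) (L : square n) : square n :=
  let: (a, b, g) := t in
  [ffun rc : 'I_n * 'I_n => g (L (a^-1 rc.1, b^-1 rc.2))].

Definition isotopic n (L L' : square n) : Prop :=
  exists t : isotopism n, isotope t L = L'.

Definition autotopy n (L : square n) : {set isotopism n} :=
  [set t : isotopism n | isotope t L == L].

Lemma ord_pos n (i : 'I_n) : 0 < n.
Proof. by case: i => i /=; apply: leq_ltn_trans. Qed.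

Definition cayley n : square n :=
  [ffun rc : 'I_n * 'I_n =>
     Ordinal (ltn_pmod (rc.1 + rc.2) (ord_pos rc.1))].

From mathcomp Require Import all_boot all_fingroup cyclic pgroup.
Set Implicit Arguments. Unset Strict Implicit. Unset Printing Implicit Defensive.
Local Open Scope group_scope.

(* View row r as the permutation rho r : c |-> L (r, c) (the inverse of the
   row permutation of the statement, with the same sign). An autotopy (a, b, g)
   satisfies b * rho (a r) = rho r * g, so when its order is odd (hence b and
   g are even) a preserves row parity; if moreover a is a nontrivial element
   of order p, it is a p-cycle and all rows have the same parity. Hence an
   autotopy of order p (Cauchy) kills the row or the column classes. Since p^2
   does not divide p! = |S_p|, when p^2 divides |A(L)| both kernels of
   (a, b, g) |-> a and (a, b, g) |-> b contain elements of order p (Cauchy);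
   one with a = 1 has b <> 1, killing the column parity classes, and the other
   kills the row classes. An autotopy (1, b, g) of order p also gives
   L (r, b^j c0) = g^j (L (r, c0)), which after numbering columns and symbols
   along the p-cycles b and g is the Cayley table of Z_p. *)

Lemma odd_permX (T : finType) (s : {perm T}) k :
  odd_perm (s ^+ k) = odd k && odd_perm s.
Proof.
elim: k => [|k IHk]; first by rewrite expg0 odd_perm1.
by rewrite expgS odd_permM IHk /=; case: (odd_perm s); case: (odd k).
Qed.

Lemma odd_perm_odd_order (T : finType) (s : {perm T}) :
  odd #[s] -> odd_perm s = false.
Proof. by move=> odd_s; have := odd_permX s #[s]; rewrite expg_order odd_perm1 odd_s. Qed.

Lemma minn_card_sign_classes (T : finType) (f : pred T) x :
  (forall y, f y = f x) -> minn #|[set y | f y]| #|[set y | ~~ f y]| = 0.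
Proof.
move=> f_const; case fx: (f x).
  suff -> : [set y | ~~ f y] = set0 by rewrite cards0 minn0.
  by apply/setP => y; rewrite !inE f_const fx.
suff -> : [set y | f y] = set0 by rewrite cards0 min0n.
by apply/setP => y; rewrite !inE f_const fx.
Qed.

Lemma prime_not_dvd_fact p k : prime p -> k < p -> ~~ (p %| k`!).
Proof.
move=> p_pr; elim: k => [|k IHk] lt_k_p; first by rewrite dvdn1 gtn_eqF ?prime_gt1.
by rewrite factS Euclid_dvdM // negb_or gtnNdvd // IHk // ltnW.
Qed.

Lemma prime_sq_not_dvd_fact p : prime p -> ~~ (p ^ 2 %| p`!).
Proof.
case: p => // p p_pr.
by rewrite factS expnS expn1 dvdn_pmul2l // prime_not_dvd_fact.
Qed.

Lemma prime_dvd_kerI (aT rT : finGroupType) (D G : {group aT})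
    (f : {morphism D >-> rT}) p :
  prime p -> G \subset D -> p ^ 2 %| #|G| -> ~~ (p ^ 2 %| #|f @* G|) ->
  p %| #|G :&: 'ker f|.
Proof.
move=> p_pr sGD p2G; apply: contraR => p'K.
have p2'K : coprime (p ^ 2) #|G :&: 'ker f| by rewrite coprimeXl // prime_coprime.
by rewrite card_morphim (setIidPr sGD) -(Gauss_dvdr _ p2'K) LagrangeI.
Qed.

Lemma order_prime_nt (gT : finGroupType) (x : gT) p :
  prime p -> #[x] %| p -> x != 1 -> #[x] = p.
Proof. by move=> p_pr dvd_xp x1; apply/(prime_nt_dvdP p_pr) => //; rewrite order_eq1. Qed.

Lemma prime_order_neq1 (gT : finGroupType) (x : gT) p : prime p -> #[x] = p -> x != 1.
Proof. by move=> p_pr ox; rewrite -order_gt1 ox prime_gt1. Qed.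

Lemma Cauchy_ker_perm (aT : finGroupType) (D G : {group aT}) p
    (f : {morphism D >-> {perm 'I_p}}) :
  prime p -> G \subset D -> p ^ 2 %| #|G| -> {x | x \in G :&: 'ker f & #[x] = p}.
Proof.
move=> p_pr sGD p2G; apply: Cauchy => //; apply: prime_dvd_kerI => //.
apply: contraNN (prime_sq_not_dvd_fact p_pr) => /dvdn_trans-> //.
by rewrite -card_Sn -cardsT cardSg ?subsetT.
Qed.

Section PrimeCycle.
Variables (p : nat) (g : {perm 'I_p}) (x : 'I_p).
Hypotheses (p_pr : prime p) (g_order : #[g] = p).

Lemma cycle_coord_inj : injective (fun k : 'I_p => (g ^+ k) x).
Proof.
(* g is a p-cycle, so no nontrivial power of g fixes x. *)
have Cg1 : 'C_<[g]>[x | 'P] = 1 by apply: perm_prime_astab; rewrite card_ord.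
move=> i j eq_ij; apply/val_inj/eqP.
suff : g ^+ i == g ^+ j by rewrite eq_expg_mod_order g_order !modn_small.
rewrite -(mulgKV (g ^+ j) (g ^+ i)) -[X in _ == X]mul1g.
suff : g ^+ i * (g ^+ j)^-1 \in 'C_<[g]>[x | 'P] by rewrite Cg1 => /set1gP->.
rewrite inE groupM ?groupV ?mem_cycle //=; apply/astab1P.
by rewrite /= apermE permM /= eq_ij -permM mulgV perm1.
Qed.

Definition cycle_coord := perm cycle_coord_inj.

Lemma cycle_coordE k : cycle_coord k = (g ^+ k) x.
Proof. by rewrite permE. Qed.

Lemma cycle_coordV_expg j y :
  val (cycle_coord^-1 ((g ^+ j) y)) = (j + cycle_coord^-1 y) %% p.
Proof.
have gp : g ^+ p = 1 by have := expg_order g; rewrite g_order.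
have lt_jy : (j + cycle_coord^-1 y) %% p < p by rewrite ltn_pmod ?prime_gt0.
rewrite -{1}(permKV cycle_coord y) cycle_coordE -[(g ^+ j) _]permM.
rewrite -expgD addnC -(expg_mod _ gp) -[(j + _) %% p]/(val (Ordinal lt_jy)).
by rewrite -cycle_coordE permK.
Qed.

End PrimeCycle.

Section IsotopismComponents.
Variable n : nat.

Definition isotopism_row_morphism :=
  @Morphism _ _ [set: isotopism n] (fun t : isotopism n => t.1.1) (in2W (fun _ _ => erefl)).
Definition isotopism_col_morphism :=
  @Morphism _ _ [set: isotopism n] (fun t : isotopism n => t.1.2) (in2W (fun _ _ => erefl)).
Definition isotopism_symbol_morphism :=
  @Morphism _ _ [set: isotopism n] (fun t : isotopism n => t.2) (in2W (fun _ _ => erefl)).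

Lemma order_isotopism_row (t : isotopism n) : #[t.1.1] %| #[t].
Proof. exact (morph_order isotopism_row_morphism (in_setT t)). Qed.

Lemma order_isotopism_col (t : isotopism n) : #[t.1.2] %| #[t].
Proof. exact (morph_order isotopism_col_morphism (in_setT t)). Qed.

Lemma order_isotopism_symbol (t : isotopism n) : #[t.2] %| #[t].
Proof. exact (morph_order isotopism_symbol_morphism (in_setT t)). Qed.

Lemma isotopism_eq1 (t : isotopism n) : t.1.1 = 1 -> t.1.2 = 1 -> t.2 = 1 -> t = 1.
Proof. by case: t => [[a b] g] /= -> -> ->. Qed.

End IsotopismComponents.

Section LatinSquare.
Variables (n : nat) (L : square n).

Lemma autotopyP (t : isotopism n) :
  reflect (forall r c, L (t.1.1 r, t.1.2 c) = t.2 (L (r, c))) (t \in autotopy L).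
Proof.
case: t => [[a b] g]; rewrite inE; apply: (iffP eqP) => /= [isoL r c | autoL].
  by rewrite -{1}isoL ffunE /= !permK.
by apply/ffunP => -[r c]; rewrite ffunE /= -autoL !permKV.
Qed.

Lemma autotopy_group_set : group_set (autotopy L).
Proof.
apply/group_setP; split; first by apply/autotopyP => r c; rewrite !perm1.
move=> t u /autotopyP Lt /autotopyP Lu; apply/autotopyP => r c.
by rewrite !permM Lu Lt.
Qed.

Canonical autotopy_group := Group autotopy_group_set.

Hypothesis hL : latin L.

Lemma row_oddE r : row_odd L r = odd_perm (perm (hL.1 r)).
Proof.
have rowK i : L (r, (perm (hL.1 r))^-1 i) = i.
  by have := permKV (perm (hL.1 r)) i; rewrite permE.
rewrite /row_odd /row_perm; case: pickP => [s /forallP Ls | /(_ (perm (hL.1 r))^-1)].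
  suff -> : s = (perm (hL.1 r))^-1 by rewrite odd_permV.
  by apply/permP => i; apply: (hL.1 r); rewrite /= (eqP (Ls i)) rowK.
by move/forallP; case=> i; rewrite rowK.
Qed.

Lemma col_oddE c : col_odd L c = odd_perm (perm (hL.2 c)).
Proof.
have colK i : L ((perm (hL.2 c))^-1 i, c) = i.
  by have := permKV (perm (hL.2 c)) i; rewrite permE.
rewrite /col_odd /col_perm; case: pickP => [s /forallP Ls | /(_ (perm (hL.2 c))^-1)].
  suff -> : s = (perm (hL.2 c))^-1 by rewrite odd_permV.
  by apply/permP => i; apply: (hL.2 c); rewrite /= (eqP (Ls i)) colK.
by move/forallP; case=> i; rewrite colK.
Qed.

Lemma row_odd_autotopy t r : t \in autotopy L ->
  row_odd L (t.1.1 r) = row_odd L r (+) odd_perm t.1.2 (+) odd_perm t.2.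
Proof.
move=> /autotopyP Lt; rewrite !row_oddE.
have rowM : t.1.2 * perm (hL.1 (t.1.1 r)) = perm (hL.1 r) * t.2.
  by apply/permP => c; rewrite !permM !permE /= Lt.
have := congr1 (@odd_perm _) rowM; rewrite !odd_permM => oddM.
by rewrite addbAC -oddM addbAC addbb.
Qed.

Lemma col_odd_autotopy t c : t \in autotopy L ->
  col_odd L (t.1.2 c) = col_odd L c (+) odd_perm t.1.1 (+) odd_perm t.2.
Proof.
move=> /autotopyP Lt; rewrite !col_oddE.
have colM : t.1.1 * perm (hL.2 (t.1.2 c)) = perm (hL.2 c) * t.2.
  by apply/permP => r; rewrite !permM !permE /= Lt.
have := congr1 (@odd_perm _) colM; rewrite !odd_permM => oddM.
by rewrite addbAC -oddM addbAC addbb.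
Qed.

Lemma autotopy_eq1 t : t \in autotopy L -> t.1.1 = 1 -> t.1.2 = 1 -> t = 1.
Proof.
move=> /autotopyP Lt a1 b1; apply: isotopism_eq1 => //; apply/permP => y.
have [f _ fK] := injF_bij (hL.1 y).
by have := Lt y (f y); rewrite a1 b1 !perm1 fK => /esym.
Qed.

Lemma autotopy_col_neq1 t : t \in autotopy L -> t != 1 -> t.1.1 = 1 -> t.1.2 != 1.
Proof. by move=> tL t1 a1; apply: contra_neq t1 => b1; exact (autotopy_eq1 tL a1 b1). Qed.

Lemma autotopy_row_neq1 t : t \in autotopy L -> t != 1 -> t.1.2 = 1 -> t.1.1 != 1.
Proof. by move=> tL t1 b1; apply: contra_neq t1 => a1; exact (autotopy_eq1 tL a1 b1). Qed.

Lemma row_parity_eq0 t r0 : t \in autotopy L -> odd #[t] ->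
  (forall r, exists i, r = (t.1.1 ^+ i) r0) -> (parity_type L).1 = 0.
Proof.
move=> tL odd_t row_orbit.
have even_b := odd_perm_odd_order (dvdn_odd (order_isotopism_col t) odd_t).
have even_g := odd_perm_odd_order (dvdn_odd (order_isotopism_symbol t) odd_t).
apply: (minn_card_sign_classes (x := r0)) => r; have [i ->] := row_orbit r.
elim: i => [|i IHi]; first by rewrite expg0 perm1.
by rewrite expgSr permM row_odd_autotopy // even_b even_g !addbF.
Qed.

Lemma col_parity_eq0 t c0 : t \in autotopy L -> odd #[t] ->
  (forall c, exists i, c = (t.1.2 ^+ i) c0) -> (parity_type L).2 = 0.
Proof.
move=> tL odd_t col_orbit.
have even_a := odd_perm_odd_order (dvdn_odd (order_isotopism_row t) odd_t).
have even_g := odd_perm_odd_order (dvdn_odd (order_isotopism_symbol t) odd_t).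
apply: (minn_card_sign_classes (x := c0)) => c; have [i ->] := col_orbit c.
elim: i => [|i IHi]; first by rewrite expg0 perm1.
by rewrite expgSr permM col_odd_autotopy // even_a even_g !addbF.
Qed.

End LatinSquare.

Section PrimeOrder.
Variables (p : nat) (L : square p).
Hypotheses (p_pr : prime p) (hL : latin L).

Let x0 : 'I_p := Ordinal (prime_gt0 p_pr).

Lemma autotopy_row_parity t : odd p -> t \in autotopy L -> #[t] = p ->
  t.1.1 != 1 -> (parity_type L).1 = 0.
Proof.
move=> odd_p tL ot a1.
have oa : #[t.1.1] = p.
  by apply: order_prime_nt a1 => //; rewrite -[X in _ %| X]ot order_isotopism_row.
apply: (row_parity_eq0 hL (r0 := x0) tL); first by rewrite ot.
by move=> r; exists ((cycle_coord x0 p_pr oa)^-1 r); rewrite -cycle_coordE permKV.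
Qed.

Lemma autotopy_col_parity t : odd p -> t \in autotopy L -> #[t] = p ->
  t.1.2 != 1 -> (parity_type L).2 = 0.
Proof.
move=> odd_p tL ot b1.
have ob : #[t.1.2] = p.
  by apply: order_prime_nt b1 => //; rewrite -[X in _ %| X]ot order_isotopism_col.
apply: (col_parity_eq0 hL (c0 := x0) tL); first by rewrite ot.
by move=> c; exists ((cycle_coord x0 p_pr ob)^-1 c); rewrite -cycle_coordE permKV.
Qed.

Lemma autotopy_isotopic_cayley t : t \in autotopy L -> #[t] = p -> t.1.1 = 1 ->
  isotopic L (cayley p).
Proof.
move=> tL ot a1; have b1 := autotopy_col_neq1 hL tL (prime_order_neq1 p_pr ot) a1.
have Lb r c : L (r, t.1.2 c) = t.2 (L (r, c)) by rewrite -(autotopyP _ _ tL) a1 perm1.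
have g1 : t.2 != 1.
  apply: contra_neq b1 => g1; apply/permP => c; apply: (hL.1 x0).
  by rewrite /= Lb g1 !perm1.
have ob : #[t.1.2] = p.
  by apply: order_prime_nt b1 => //; rewrite -[X in _ %| X]ot order_isotopism_col.
have og : #[t.2] = p.
  by apply: order_prime_nt g1 => //; rewrite -[X in _ %| X]ot order_isotopism_symbol.
have LbX r k c : L (r, (t.1.2 ^+ k) c) = (t.2 ^+ k) (L (r, c)).
  by elim: k => [|k IHk]; rewrite ?expg0 ?perm1 // !expgSr !permM Lb IHk.
pose beta := cycle_coord x0 p_pr ob; pose gamma := cycle_coord (L (x0, x0)) p_pr og.
have row_inj : injective (fun r => gamma^-1 (L (r, x0))).
  by move=> r r' /perm_inj /(hL.2 x0).
exists (perm row_inj, beta^-1, gamma^-1); apply/ffunP => -[r c].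
rewrite !ffunE invgK cycle_coordE LbX; apply: val_inj => /=.
have rowE r' : gamma^-1 (L (r', x0)) = perm row_inj r' by rewrite permE.
by rewrite cycle_coordV_expg rowE permKV addnC.
Qed.

Lemma autotopy_row_kernel_elt : p ^ 2 %| #|autotopy L| ->
  exists2 t, t \in autotopy L & #[t] = p /\ t.1.1 = 1.
Proof.
case/(Cauchy_ker_perm (isotopism_row_morphism p) p_pr (subsetT _)) => t.
by move=> /setIP[tL]; rewrite !inE => /eqP a1 ot; exists t.
Qed.

Lemma autotopy_col_kernel_elt : p ^ 2 %| #|autotopy L| ->
  exists2 t, t \in autotopy L & #[t] = p /\ t.1.2 = 1.
Proof.
case/(Cauchy_ker_perm (isotopism_col_morphism p) p_pr (subsetT _)) => t.
by move=> /setIP[tL]; rewrite !inE => /eqP b1 ot; exists t.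
Qed.

Lemma autotopy_sq_parity_type : odd p -> p ^ 2 %| #|autotopy L| -> parity_type L = (0, 0).
Proof.
move=> odd_p p2A.
have [t tL [ot a1]] := autotopy_row_kernel_elt p2A.
have [u uL [ou b1]] := autotopy_col_kernel_elt p2A.
have t1 := prime_order_neq1 p_pr ot; have u1 := prime_order_neq1 p_pr ou.
have m0 := autotopy_col_parity odd_p tL ot (autotopy_col_neq1 hL tL t1 a1).
have k0 := autotopy_row_parity odd_p uL ou (autotopy_row_neq1 hL uL u1 b1).
by move: k0 m0; case: (parity_type L) => k m /= -> ->.
Qed.

Lemma autotopy_prime_parity_type : odd p -> p %| #|autotopy L| ->
  (parity_type L).1 = 0 \/ (parity_type L).2 = 0.
Proof.
move=> odd_p /(Cauchy p_pr) [t tL ot]; have t1 := prime_order_neq1 p_pr ot.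
have [a1 | a1] := eqVneq t.1.1 1; last by left; apply: autotopy_row_parity a1.
by right; apply: autotopy_col_parity (autotopy_col_neq1 hL tL t1 a1).
Qed.

Lemma autotopy_sq_isotopic_cayley : p ^ 2 %| #|autotopy L| -> isotopic L (cayley p).
Proof.
by case/autotopy_row_kernel_elt => t tL [ot a1]; apply: autotopy_isotopic_cayley a1.
Qed.

End PrimeOrder.

Theorem corollary4p1 (p : nat) (L : square p) :
  prime p -> 2 < p -> latin L ->
  [/\ ((parity_type L).1 != 0 \/ (parity_type L).2 != 0) ->
        ~~ (p ^ 2 %| #|autotopy L|),
      ((parity_type L).1 != 0 /\ (parity_type L).2 != 0) ->
        ~~ (p %| #|autotopy L|)
    & (parity_type L = (0, 0) -> ~ isotopic L (cayley p) ->
        ~~ (p ^ 2 %| #|autotopy L|))].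
Proof.
move=> p_pr p_gt2 hL.
have odd_p : odd p by case: (even_prime p_pr) p_gt2 => [-> |].
split => [km | [k0 m0] | _ not_iso]; apply/negP.
- by move=> /(autotopy_sq_parity_type p_pr hL odd_p) pt0; rewrite pt0 in km; case: km.
- by case/(autotopy_prime_parity_type p_pr hL odd_p) => pt0; rewrite pt0 ?eqxx in k0 m0.
- by move/(autotopy_sq_isotopic_cayley p_pr hL).
Qed.
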